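(* In the framework of the context, let $\Gamma\subseteq Sen(\Sigma)$ and $\psi\in Sen(\Sigma)$, and let $\varphi\in Sen(\Sigma)$ be an invariant formula. Then $\Gamma\cup\{\varphi\}\vdash_\Sigma\psi$ if and only if $\Gamma\vdash_\Sigma\varphi\Rightarrow\psi$.
   Context: Framework. $\mathcal{I}$ is a stratified institution: signatures $\Sigma$, formulas $Sen(\Sigma)$, models $Mod(\Sigma)$, a set of states $[\![M]\!]_\Sigma$ for each model (functorial along model morphisms $\mu$, giving maps $[\![\mu]\!]_\Sigma$), and satisfaction $M\models^\eta_\Sigma\varphi$; $M\models_\Sigma\varphi$ iff $M\models^\eta_\Sigma\varphi$ for all states $\eta$; $[\![M]\!]_\Sigma(\varphi)=\{\eta\mid M\models^\eta_\Sigma\varphi\}$; $\varphi\preceq_M\psi$ iff $[\![M]\!]_\Sigma(\varphi)\subseteq[\![M]\!]_\Sigma(\psi)$, $\equiv_M$ the corresponding equality; $\Gamma\models\varphi$ iff every model satisfying all of $\Gamma$ satisfies $\varphi$. $\mathcal{I}$ has semantic $\neg,\wedge,\vee,\Rightarrow$ (complement, intersection, union, and complement-union on state sets). There is an index set $I$ and for each $i\in I$ unary operations $E^i,D^i$ on formulas with, for all $M$, $\varphi,\psi$: $E^i(\varphi)\equiv_M\neg D^i(\neg\varphi)$, $E^i(\varphi\wedge\psi)\equiv_M E^i(\varphi)\wedge E^i(\psi)$, $D^i(\varphi\vee\psi)\equiv_M D^i(\varphi)\vee D^i(\psi)$, $E^i(\varphi)\preceq_M\varphi\preceq_M D^i(\varphi)$,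 and $\varphi\models E^i(\varphi)$. There is a subfunctor $Sen^{base}\subseteq Sen$ with each $Sen^{base}(\Sigma)$ basic, and $Sen(\Sigma)$ is the least set containing $Sen^{base}(\Sigma)$ closed under $\neg,\wedge,\vee,\Rightarrow,E^i,D^i$. A formula $\varphi$ is invariant if $\varphi\preceq_M E^i(\varphi)$ for all $i\in I$ and all $M$. $\varphi'$ is an instance of $\varphi$ for $i$ if $E^i(\varphi)\preceq_M\varphi'$ for all $M$. A tautology instance is a formula obtained from a classical propositional tautology by substituting formulas for its variables. Proof system: axioms are all tautology instances; $E^i(\varphi)\Leftrightarrow\neg D^i(\neg\varphi)$; $E^i(\varphi\Rightarrow\psi)\Rightarrow(E^i(\varphi)\Rightarrow E^i(\psi))$; $E^i(\varphi)\Rightarrow\varphi'$ whenever $\varphi'$ is an instance of $\varphi$ for $i$; $\varphi\Rightarrow E^i(\varphi)$ whenever $\varphi$ is invariant. $\Gamma\vdash_\Sigma\varphi$ is the least relation such that: $\varphi\in\Gamma$ implies $\Gamma\vdash_\Sigma\varphi$; every axiom $\varphi$ gives $\Gamma\vdash_\Sigma\varphi$; $\Gamma\vdash_\Sigma\varphi$ and $\Delta\vdash_\Sigma\varphi\Rightarrow\psi$ give $\Gamma\cup\Delta\vdash_\Sigma\psi$ (Modus Ponens); $\Gamma\vdash_\Sigma\varphi$ gives $\Gamma\vdash_\Sigma E^i(\varphi)$ (Necessity). *)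

From Stdlib Require Import Classical.
Set Implicit Arguments.

(* Propositional formulas over variables nat, used for tautology instances. *)
Inductive PForm : Type :=
| PVar : nat -> PForm
| PNeg : PForm -> PForm
| PAnd : PForm -> PForm -> PForm
| POr  : PForm -> PForm -> PForm
| PImp : PForm -> PForm -> PForm.

Fixpoint peval (v : nat -> bool) (p : PForm) : bool :=
  match p with
  | PVar n => v n
  | PNeg p => negb (peval v p)
  | PAnd p q => andb (peval v p) (peval v q)
  | POr p q => orb (peval v p) (peval v q)
  | PImp p q => orb (negb (peval v p)) (peval v q)
  end.

Definition ptaut (p : PForm) : Prop := forall v, peval v p = true.

(* The stratified institution with the logical structure of the context,
   restricted to what concerns a fixed signature. *)
Record StratInst := {
  Sig : Type;
  Sen : Sig -> Type;
  Mod : Sig -> Type;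
  St  : forall S : Sig, Mod S -> Type;
  sat : forall S (M : Mod S), St M -> Sen S -> Prop;
  Idx : Type;
  neg : forall S, Sen S -> Sen S;
  conj : forall S, Sen S -> Sen S -> Sen S;
  disj : forall S, Sen S -> Sen S -> Sen S;
  impl : forall S, Sen S -> Sen S -> Sen S;
  E : forall S, Idx -> Sen S -> Sen S;
  D : forall S, Idx -> Sen S -> Sen S;
  base : forall S, Sen S -> Prop;
  sat_neg : forall S (M : Mod S) (e : St M) p, sat e (neg p) <-> ~ sat e p;
  sat_conj : forall S (M : Mod S) (e : St M) p q, sat e (conj p q) <-> sat e p /\ sat e q;
  sat_disj : forall S (M : Mod S) (e : St M) p q, sat e (disj p q) <-> sat e p \/ sat e q;
  sat_impl : forall S (M : Mod S) (e : St M) p q, sat e (impl p q) <-> ~ sat e p \/ sat e q;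
  (* modal laws, stated pointwise on states, i.e. as equalities of state sets *)
  E_dual : forall S (M : Mod S) (e : St M) i p, sat e (E i p) <-> sat e (neg (D i (neg p)));
  E_conj : forall S (M : Mod S) (e : St M) i p q,
      sat e (E i (conj p q)) <-> sat e (conj (E i p) (E i q));
  D_disj : forall S (M : Mod S) (e : St M) i p q,
      sat e (D i (disj p q)) <-> sat e (disj (D i p) (D i q));
  E_T : forall S (M : Mod S) (e : St M) i p, sat e (E i p) -> sat e p;
  D_T : forall S (M : Mod S) (e : St M) i p, sat e p -> sat e (D i p);
  E_nec : forall S (M : Mod S) i p,
      (forall e : St M, sat e p) -> (forall e : St M, sat e (E i p));
  (* Sen(S) is the least set containing Sen^base(S) closed under the connectives *)
  Sen_gen : forall S (P : Sen S -> Prop),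
      (forall p, base p -> P p) ->
      (forall p, P p -> P (neg p)) ->
      (forall p q, P p -> P q -> P (conj p q)) ->
      (forall p q, P p -> P q -> P (disj p q)) ->
      (forall p q, P p -> P q -> P (impl p q)) ->
      (forall i p, P p -> P (E i p)) ->
      (forall i p, P p -> P (D i p)) ->
      forall p, P p
}.

Arguments sat {s S M} e p.
Arguments neg {s S} p.
Arguments conj {s S} p q.
Arguments disj {s S} p q.
Arguments impl {s S} p q.
Arguments E {s S} i p.
Arguments D {s S} i p.

Section Logic.
Variable I : StratInst.
Variable S : Sig I.

Definition prec (M : Mod I S) (p q : Sen I S) : Prop :=
  forall e : @St I S M, sat e p -> sat e q.

Definition equivM (M : Mod I S) (p q : Sen I S) : Prop := prec M p q /\ prec M q p.

Definition msat (M : Mod I S) (p : Sen I S) : Prop := forall e : @St I S M, sat e p.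

Definition invariant (p : Sen I S) : Prop :=
  forall (i : Idx I) (M : Mod I S), prec M p (E i p).

Definition instance_of (i : Idx I) (p p' : Sen I S) : Prop :=
  forall M : Mod I S, prec M (E i p) p'.

Fixpoint psubst (s : nat -> Sen I S) (f : PForm) : Sen I S :=
  match f with
  | PVar n => s n
  | PNeg f => neg (psubst s f)
  | PAnd f g => conj (psubst s f) (psubst s g)
  | POr f g => disj (psubst s f) (psubst s g)
  | PImp f g => impl (psubst s f) (psubst s g)
  end.

Definition taut_instance (p : Sen I S) : Prop :=
  exists (f : PForm) (s : nat -> Sen I S), ptaut f /\ p = psubst s f.

Definition iff_ (p q : Sen I S) : Sen I S := conj (impl p q) (impl q p).

Inductive axiom : Sen I S -> Prop :=
| ax_taut : forall p, taut_instance p -> axiom p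
| ax_dual : forall i p, axiom (iff_ (E i p) (neg (D i (neg p))))
| ax_K : forall i p q, axiom (impl (E i (impl p q)) (impl (E i p) (E i q)))
| ax_inst : forall i p p', instance_of i p p' -> axiom (impl (E i p) p')
| ax_inv : forall i p, invariant p -> axiom (impl p (E i p)).

Definition setU (G H : Sen I S -> Prop) : Sen I S -> Prop := fun x => G x \/ H x.
Definition set1 (p : Sen I S) : Sen I S -> Prop := fun x => x = p.

Inductive deriv : (Sen I S -> Prop) -> Sen I S -> Prop :=
| d_hyp : forall G p, G p -> deriv G p
| d_ax : forall G p, axiom p -> deriv G p
| d_mp : forall G H p q, deriv G p -> deriv H (impl p q) -> deriv (setU G H) q
| d_nec : forall G i p, deriv G p -> deriv G (E i p).

End Logic.

Arguments prec {I S} M p q.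
Arguments equivM {I S} M p q.
Arguments msat {I S} M p.
Arguments invariant {I S} p.
Arguments instance_of {I S} i p p'.
Arguments taut_instance {I S} p.
Arguments axiom {I S} _.
Arguments setU {I S} G H _.
Arguments set1 {I S} p _.
Arguments deriv {I S} _ _.

(* Hypotheses, axioms and Modus Ponens are handled
   by propositional tautologies as in classical logic.  The only obstacle is
   Necessity, which turns phi -> p into E(phi -> p); the K axiom gives
   E phi -> E p, and it is exactly the invariance axiom phi -> E phi that
   closes the gap. *)
From Stdlib Require Import FunctionalExtensionality PropExtensionality.

Section Deduction.
Variable I : StratInst.
Variable S : Sig I.
Implicit Types (G H : Sen I S -> Prop) (a b c p q : Sen I S).

(* [d_mp] concludes in the union of the two contexts; collapsing [setU G G]
   to [G] is what requires extensionality. *)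
Lemma setUid G : setU G G = G.
Proof.
apply functional_extensionality; intro x.
apply propositional_extensionality; unfold setU; tauto.
Qed.

Lemma deriv_mp G p q : deriv G p -> deriv G (impl p q) -> deriv G q.
Proof. intros Hp Hpq; rewrite <- (setUid G); exact (@d_mp I S G G p q Hp Hpq). Qed.

Lemma deriv_weaken G H p : deriv G p -> (forall x, G x -> H x) -> deriv H p.
Proof.
intros Hp; revert H.
induction Hp as [G p Gp|G p Ap|G G' p q _ IHp _ IHpq|G i p _ IHp]; intros H GH.
- now apply d_hyp, GH.
- now apply d_ax.
- apply deriv_mp with p.
  + apply IHp; intros x Gx; apply GH; now left.
  + apply IHpq; intros x Gx; apply GH; now right.
- now apply d_nec, IHp.
Qed.

Lemma deriv_taut G (f : PForm) (s : nat -> Sen I S) :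
  ptaut f -> deriv G (psubst I S s f).
Proof. intros Hf; apply d_ax, ax_taut; now exists f, s. Qed.

Lemma deriv_impl_refl G p : deriv G (impl p p).
Proof.
apply (deriv_taut G (PImp (PVar 0) (PVar 0)) (fun _ => p)).
intros v; simpl; now destruct (v 0).
Qed.

Lemma deriv_impl_intro G p q : deriv G q -> deriv G (impl p q).
Proof.
intros Hq; apply deriv_mp with q; [exact Hq|].
apply (deriv_taut G (PImp (PVar 0) (PImp (PVar 1) (PVar 0)))
         (fun n => match n with 0 => q | _ => p end)).
intros v; simpl; now destruct (v 0), (v 1).
Qed.

Lemma deriv_impl_S G a b c :
  deriv G (impl a b) -> deriv G (impl a (impl b c)) -> deriv G (impl a c).
Proof.
intros Hab Habc; apply deriv_mp with (impl a (impl b c)); [exact Habc|].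
apply deriv_mp with (impl a b); [exact Hab|].
apply (deriv_taut G
  (PImp (PImp (PVar 0) (PVar 1))
     (PImp (PImp (PVar 0) (PImp (PVar 1) (PVar 2))) (PImp (PVar 0) (PVar 2))))
  (fun n => match n with 0 => a | 1 => b | _ => c end)).
intros v; simpl; now destruct (v 0), (v 1), (v 2).
Qed.

Lemma deriv_impl_trans G a b c :
  deriv G (impl a b) -> deriv G (impl b c) -> deriv G (impl a c).
Proof.
intros Hab Hbc; apply deriv_impl_S with b; [exact Hab|].
now apply deriv_impl_intro.
Qed.

Lemma deriv_E_mono G i a b :
  deriv G (impl a b) -> deriv G (impl (E i a) (E i b)).
Proof.
intros Hab; apply deriv_mp with (E i (impl a b)).
- now apply d_nec.
- apply d_ax, ax_K.
Qed.

Lemma deriv_deduction G phi psi (D : Sen I S -> Prop) :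
  invariant phi -> deriv D psi -> (forall x, D x -> G x \/ x = phi) ->
  deriv G (impl phi psi).
Proof.
intros Hinv Hpsi; induction Hpsi as [D p Dp|D p Ap|D D' p q _ IHp _ IHpq|D i p _ IHp];
  intros DG.
- destruct (DG p Dp) as [Gp | ->].
  + now apply deriv_impl_intro, d_hyp.
  + apply deriv_impl_refl.
- now apply deriv_impl_intro, d_ax.
- apply deriv_impl_S with p.
  + apply IHp; intros x Dx; apply DG; now left.
  + apply IHpq; intros x Dx; apply DG; now right.
- apply deriv_impl_trans with (E i phi).
  + now apply d_ax, ax_inv.
  + now apply deriv_E_mono, IHp.
Qed.

End Deduction.

Theorem mainTheorem8 (I : StratInst) (S : Sig I) (G : Sen I S -> Prop)
  (phi psi : Sen I S) :
  invariant phi ->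
  (deriv (setU G (set1 phi)) psi <-> deriv G (impl phi psi)).
Proof.
intros Hinv; split; intros Hpsi.
- apply deriv_deduction with (setU G (set1 phi)); [exact Hinv|exact Hpsi|].
  intros x [Gx | ->]; [now left|now right].
- apply deriv_mp with phi.
  + apply d_hyp; now right.
  + apply deriv_weaken with G; [exact Hpsi|].
    intros x Gx; now left.
Qed.
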